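(* Let $\vec r_1,\vec r_2$ be in the closed unit ball of $\mathbb{R}^3$ and linearly dependent, with $r_i=|\vec r_i|$ and $m=\max\{r_1,r_2\}$. Then $$d^2_{\mathrm{symm},2}(\rho(\vec r_1),\rho(\vec r_2))=2\Big(|\vec r_1-\vec r_2|+\sqrt{1-r_1^2}+\sqrt{1-r_2^2}-2\sqrt{\big(1+\tfrac{\vec r_1\cdot\vec r_2}{m}\big)(1-m)}\Big),$$ with the convention that $\tfrac{\vec r_1\cdot\vec r_2}{m}=0$ when $m=0$.
   Context: Qubit setting: $\mathcal{H}=\mathbb{C}^2$, $\mathcal{H}^*$ is identified with $\mathbb{C}^2$ via the dual basis, and $A^T$ is the usual matrix transpose; operators on $\mathcal{H}\otimes\mathcal{H}^*$ are $4\times4$ matrices in the basis $e_1\otimes e_1^*,e_1\otimes e_2^*,e_2\otimes e_1^*,e_2\otimes e_2^*$. Pauli matrices: $\sigma_1=\sigma_x=\begin{pmatrix}0&1\\1&0\end{pmatrix}$, $\sigma_2=\sigma_y=\begin{pmatrix}0&-i\\i&0\end{pmatrix}$, $\sigma_3=\sigma_z=\begin{pmatrix}1&0\\0&-1\end{pmatrix}$, $\vec\sigma=(\sigma_1,\sigma_2,\sigma_3)$, and $\rho(\vec r)=\tfrac12(I+\vec r\cdot\vec\sigma)$ for $|\vec r|\le1$. The set of couplings of states $\rho,\omega$ is $\mathcal{C}(\rho,\omega)=\{\Pi\in\mathcal{S}(\mathcal{H}\otimes\mathcal{H}^* ):\mathrm{tr}_{\mathcal{H}^*}[\Pi]=\omega,\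 \mathrm{tr}_{\mathcal{H}}[\Pi]=\rho^T\}$. $C_{\mathrm{symm},2}=\sum_{k=1}^3(\sigma_k\otimes I^T-I\otimes\sigma_k^T)^2$, which equals the matrix $\begin{pmatrix}4&0&0&-4\\0&8&0&0\\0&0&8&0\\-4&0&0&4\end{pmatrix}$; $D^2_{\mathrm{symm},2}(\rho,\omega)=\min_{\Pi\in\mathcal{C}(\rho,\omega)}\mathrm{tr}[\Pi C_{\mathrm{symm},2}]$, and the quadratic Wasserstein divergence is $d_{\mathrm{symm},2}(\rho,\omega)=\big(D^2_{\mathrm{symm},2}(\rho,\omega)-\tfrac12(D^2_{\mathrm{symm},2}(\rho,\rho)+D^2_{\mathrm{symm},2}(\omega,\omega))\big)^{1/2}$. *)

From mathcomp Require Import all_boot all_order all_algebra.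
From mathcomp Require Import classical_sets reals.
From mathcomp.real_closed Require Import complex.
Set Implicit Arguments. Unset Strict Implicit. Unset Printing Implicit Defensive.
Import Order.TTheory GRing.Theory Num.Theory.
Local Open Scope ring_scope.
Local Open Scope complex_scope.

Section Qubit.
Variable R : realType.
Local Notation C := (R[i]).

Definition pauli (k : 'I_3) : 'M[C]_2 :=
  if val k == 0%N then \matrix_(i < 2, j < 2) (if i == j then 0 else 1)
  else if val k == 1%N then
    \matrix_(i < 2, j < 2)
      (if i == j then 0 else if val i == 0%N then - 'i else 'i)
  else \matrix_(i < 2, j < 2)
      (if i == j then (if val i == 0%N then 1 else -1) else 0).

Definition bloch (r : 'rV[R]_3) : 'M[C]_2 :=
  2^-1 *: (1%:M + \sum_(k < 3) (r 0 k)%:C *: pauli k).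

Definition adj {m n} (A : 'M[C]_(m, n)) : 'M[C]_(n, m) := (map_mx conjc A)^T.

(* Positive semidefinite: <v, A v> >= 0 for all v (order of the
   numClosedField C: real and nonnegative). *)
Definition psd {n} (A : 'M[C]_n) : Prop :=
  forall v : 'cV[C]_n, 0 <= (adj v *m A *m v) 0 0.

Definition state {n} (A : 'M[C]_n) : Prop := psd A /\ \tr A = 1.

(* Basis of H (x) H^*: index p : 'I_4 encodes e_(p/2) (x) e_(p mod 2)^*, i.e.
   the order e1e1*, e1e2*, e2e1*, e2e2*. *)
Definition hidx (p : 'I_4) : 'I_2 := inord (p %/ 2).
Definition didx (p : 'I_4) : 'I_2 := inord (p %% 2).

Definition kron (A B : 'M[C]_2) : 'M[C]_4 :=
  \matrix_(p < 4, q < 4) (A (hidx p) (hidx q) * B (didx p) (didx q)).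

Definition ptrD (P : 'M[C]_4) : 'M[C]_2 :=
  \matrix_(i < 2, k < 2)
    \sum_(p < 4) \sum_(q < 4)
      (if (hidx p == i) && (hidx q == k) && (didx p == didx q) then P p q else 0).
Definition ptrH (P : 'M[C]_4) : 'M[C]_2 :=
  \matrix_(j < 2, l < 2)
    \sum_(p < 4) \sum_(q < 4)
      (if (didx p == j) && (didx q == l) && (hidx p == hidx q) then P p q else 0).

Definition coupling (rho omega : 'M[C]_2) (P : 'M[C]_4) : Prop :=
  state P /\ ptrD P = omega /\ ptrH P = rho^T.

Definition Csymm2 : 'M[C]_4 :=
  \sum_(k < 3) (kron (pauli k) (1%:M)^T - kron 1%:M (pauli k)^T) ^+ 2.

(* D^2_symm,2(rho, omega) = min over couplings of tr[P C]  (as infimum) *)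
Definition D2symm (rho omega : 'M[C]_2) : R :=
  inf [set x : R | exists P, coupling rho omega P /\ \tr (P *m Csymm2) = x%:C].

Definition dsymm (rho omega : 'M[C]_2) : R :=
  Num.sqrt (D2symm rho omega - (D2symm rho rho + D2symm omega omega) / 2).

Definition dot3 (u v : 'rV[R]_3) : R := \sum_(k < 3) u 0 k * v 0 k.
Definition norm3 (u : 'rV[R]_3) : R := Num.sqrt (dot3 u u).
End Qubit.

From mathcomp Require Import all_boot all_order all_algebra.
From mathcomp Require Import classical_sets reals.
From mathcomp.real_closed Require Import complex.
From mathcomp Require Import ring lra.
Import Order.TTheory GRing.Theory Num.Theory.
Set Implicit Arguments. Unset Strict Implicit. Unset Printing Implicit Defensive.
Local Open Scope ring_scope.
Local Open Scope complex_scope.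

(* Write r_i = s_i n with n a unit vector.  Since C_symm,2 = 8 - 4 |Phi><Phi| with
   Phi = e1 (x) e1^* + e2 (x) e2^*, a coupling P costs 8 - 4 <Phi|P|Phi>.  Let u and
   v = perp u be eigenvectors of n.sigma for the eigenvalues +1 and -1, with |u| = |v|;
   then |u|^2 Phi = u (x) conj u + v (x) conj v.  Contracting the marginal conditions
   with u and v fixes the sums of the weights of P on u (x) conj u, v (x) conj v,
   u (x) conj v, v (x) conj u in pairs, and positivity of P on the span of the first
   two vectors gives <Phi|P|Phi> <= (sqrt x + sqrt y)^2 with x = (1 + min s_i)/2 and
   y = (1 - max s_i)/2.  An explicit coupling attains the bound, so
   D^2_symm,2 = 8 - 4 (sqrt x + sqrt y)^2, and the formula follows by algebra. *)

Section SmallOrdinals.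
Variable V : nmodType.

Lemma sum_ord2 (F : 'I_2 -> V) : \sum_(i < 2) F i = F (inord 0) + F (inord 1).
Proof.
rewrite !big_ord_recr big_ord0 /= add0r.
by congr (_ + _); congr F; apply: val_inj; rewrite /= inordK.
Qed.

Lemma sum_ord3 (F : 'I_3 -> V) :
  \sum_(i < 3) F i = F (inord 0) + F (inord 1) + F (inord 2).
Proof.
rewrite !big_ord_recr big_ord0 /= add0r.
by congr (_ + _ + _); congr F; apply: val_inj; rewrite /= inordK.
Qed.

Lemma sum_ord4 (F : 'I_4 -> V) :
  \sum_(i < 4) F i = F (inord 0) + F (inord 1) + F (inord 2) + F (inord 3).
Proof.
rewrite !big_ord_recr big_ord0 /= add0r.
by congr (_ + _ + _ + _); congr F; apply: val_inj; rewrite /= inordK.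
Qed.

End SmallOrdinals.

Lemma ord2_cases (i : 'I_2) : i = inord 0 \/ i = inord 1.
Proof. by case: i => [[|[|]] hi] //; [left | right]; apply: val_inj; rewrite /= inordK. Qed.

Lemma ord3_cases (k : 'I_3) : [\/ k = inord 0, k = inord 1 | k = inord 2].
Proof.
case: k => [[|[|[|]]] hk] //; [apply: Or31 | apply: Or32 | apply: Or33];
  by apply: val_inj; rewrite /= inordK.
Qed.

Lemma inord_eq n (a b : nat) : (a <= n)%N -> (b <= n)%N ->
  (inord a == inord b :> 'I_n.+1) = (a == b).
Proof. by move=> ha hb; rewrite -val_eqE /= !inordK. Qed.

Section RealInequalities.
Variable R : rcfType.

Lemma le_two_sqrt_mul (al be g : R) : 0 <= al -> 0 <= be ->
  (forall c d, 0 <= c -> 0 <= d -> c * d * g <= c ^+ 2 * al + d ^+ 2 * be) ->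
  g <= 2 * Num.sqrt (al * be).
Proof.
move=> al_ge0 be_ge0 H.
have [g_le0|g_gt0] := lerP g 0.
  by apply: le_trans g_le0 _; rewrite mulr_ge0 ?sqrtr_ge0.
have [al0|al_neq0] := eqVneq al 0.
  have := H ((be + 1) / g) 1 (divr_ge0 (addr_ge0 _ _) (ltW g_gt0)) ler01.
  by rewrite al0 mulr1 divfK ?gt_eqF // mulr0 add0r expr1n mul1r; lra.
have [be0|be_neq0] := eqVneq be 0.
  have := H 1 ((al + 1) / g) ler01 (divr_ge0 (addr_ge0 _ _) (ltW g_gt0)).
  by rewrite be0 mulr0 addr0 expr1n !mul1r divfK ?gt_eqF //; lra.
have p_gt0 : 0 < Num.sqrt al by rewrite sqrtr_gt0 lt_def al_neq0.
have q_gt0 : 0 < Num.sqrt be by rewrite sqrtr_gt0 lt_def be_neq0.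
have := H _ _ (ltW q_gt0) (ltW p_gt0); rewrite sqrtrM //.
have := sqr_sqrtr al_ge0; have := sqr_sqrtr be_ge0.
set p := Num.sqrt al; set q := Num.sqrt be => e2 e1.
rewrite -e1 -e2 => Hpq.
have pq_gt0 := mulr_gt0 q_gt0 p_gt0.
rewrite -(ler_pM2l pq_gt0); apply: (le_trans Hpq).
by have -> : q ^+ 2 * p ^+ 2 + p ^+ 2 * q ^+ 2 = q * p * (2 * (p * q)) by ring.
Qed.

Lemma le_sqr_sqrt_add (al be x y f : R) : 0 <= al -> 0 <= be -> al <= x -> be <= y ->
  (forall c d, 0 <= c -> 0 <= d -> c * d * (f - al - be) <= c ^+ 2 * al + d ^+ 2 * be) ->
  f <= (Num.sqrt x + Num.sqrt y) ^+ 2.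
Proof.
move=> al_ge0 be_ge0 al_le be_le H.
have := le_two_sqrt_mul al_ge0 be_ge0 H; rewrite sqrtrM // => hf.
have hp : Num.sqrt al <= Num.sqrt x by rewrite ler_wsqrtr.
have hq : Num.sqrt be <= Num.sqrt y by rewrite ler_wsqrtr.
have := sqrtr_ge0 al; have := sqrtr_ge0 be.
have := sqr_sqrtr al_ge0; have := sqr_sqrtr be_ge0; nra.
Qed.

Lemma marginal_overlap_le (s1 s2 N a b g1 g2 f : R) :
  0 < N -> 0 <= a -> 0 <= b -> 0 <= g1 -> 0 <= g2 ->
  a + g1 = N * (N * ((1 + s2) / 2)) -> a + g2 = N * (N * ((1 + s1) / 2)) ->
  g2 + b = N * (N * ((1 - s2) / 2)) -> g1 + b = N * (N * ((1 - s1) / 2)) ->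
  (forall c d, 0 <= c -> 0 <= d -> c * d * (N * N * f - a - b) <= c ^+ 2 * a + d ^+ 2 * b) ->
  f <= (Num.sqrt ((1 + Num.min s1 s2) / 2) + Num.sqrt ((1 - Num.max s1 s2) / 2)) ^+ 2.
Proof.
move=> N_gt0 a_ge0 b_ge0 g1_ge0 g2_ge0 ea1 ea2 eb2 eb1 hq.
have NN_gt0 : 0 < N * N by rewrite mulr_gt0.
have N_neq0 : N != 0 by rewrite gt_eqF.
apply: (@le_sqr_sqrt_add (a / (N * N)) (b / (N * N))).
- by rewrite divr_ge0 // ltW.
- by rewrite divr_ge0 // ltW.
- by rewrite ler_pdivrMr //; case: (leP s1 s2) => ?; lra.
- by rewrite ler_pdivrMr //; case: (leP s1 s2) => ?; lra.
move=> c d c_ge0 d_ge0; rewrite -(ler_pM2r NN_gt0).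
have -> : c * d * (f - a / (N * N) - b / (N * N)) * (N * N) = c * d * (N * N * f - a - b).
  by field; rewrite N_neq0.
have -> : (c ^+ 2 * (a / (N * N)) + d ^+ 2 * (b / (N * N))) * (N * N) = c ^+ 2 * a + d ^+ 2 * b.
  by field; rewrite N_neq0.
exact: hq.
Qed.

Definition collinear_cost (s1 s2 : R) :=
  8 - 4 * (Num.sqrt ((1 + Num.min s1 s2) / 2) + Num.sqrt ((1 - Num.max s1 s2) / 2)) ^+ 2.

Lemma collinear_costE (a b : R) : -1 <= a -> a <= b -> b <= 1 ->
  collinear_cost a b = 4 + 2 * (b - a) - 4 * Num.sqrt ((1 + a) * (1 - b)).
Proof.
move=> ha hab hb; rewrite /collinear_cost (min_idPl hab) (max_idPr hab).
have p0 : 0 <= (1 + a) / 2 by apply: divr_ge0; lra.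
have q0 : 0 <= (1 - b) / 2 by apply: divr_ge0; lra.
rewrite sqrrD !sqr_sqrtr // -sqrtrM //.
have -> : (1 + a) / 2 * ((1 - b) / 2) = (1 + a) * (1 - b) * 2^-1 ^+ 2 by rewrite expr2; field.
by rewrite sqrtrM ?mulr_ge0 ?subr_ge0 ?sqrtr_sqr ?ger0_norm ?invr_ge0 //; lra.
Qed.

Lemma two_sqrt_cross_le (a b : R) : -1 <= a -> a <= b -> b <= 1 ->
  2 * Num.sqrt ((1 + a) * (1 - b)) <= Num.sqrt ((1 + a) * (1 - a)) + Num.sqrt ((1 + b) * (1 - b)).
Proof.
move=> ha hab hb; rewrite !sqrtrM; try lra.
have e1 : Num.sqrt (1 + a) <= Num.sqrt (1 + b) by apply: ler_wsqrtr; lra.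
have e2 : Num.sqrt (1 - b) <= Num.sqrt (1 - a) by apply: ler_wsqrtr; lra.
have := sqrtr_ge0 (1 + a); have := sqrtr_ge0 (1 - b); nra.
Qed.

Lemma collinear_cross_factor (s1 s2 : R) :
  let m := Num.max `|s1| `|s2| in
  let q := if m == 0 then 0 else s1 * s2 / m in
  (1 + q) * (1 - m) = (1 + Num.min s1 s2) * (1 - Num.max s1 s2).
Proof.
move=> m q; have [m0|m_neq0] := eqVneq m 0.
  have [s10 s20] : s1 = 0 /\ s2 = 0.
    have h1 : `|s1| <= m by rewrite /m le_max lexx.
    have h2 : `|s2| <= m by rewrite /m le_max lexx orbT.
    by move: h1 h2; rewrite m0 !normr_le0 => /eqP -> /eqP ->.
  by rewrite /q m0 eqxx s10 s20 minxx maxxx; ring.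
have qm : q * m = s1 * s2 by rewrite /q (negbTE m_neq0) divfK.
move: qm m_neq0; rewrite /m.
case: (leP `|s1| `|s2|) => h12 qm m_neq0.
- have [s2_ge0|s2_lt0] := lerP 0 s2.
  + have -> : q = s1 by apply: (mulIf m_neq0); rewrite qm ger0_norm // mulrC.
    have : s1 <= s2 by move: h12; rewrite (ger0_norm s2_ge0); case: (ler0P s1) => ?; lra.
    by move=> le12; rewrite (min_idPl le12) (max_idPr le12) ger0_norm.
  + have -> : q = - s1 by apply: (mulIf m_neq0); rewrite qm ltr0_norm //; ring.
    have : s2 <= s1 by move: h12; rewrite (ltr0_norm s2_lt0); case: (ler0P s1) => ?; lra.
    by move=> le21; rewrite (min_idPr le21) (max_idPl le21) ltr0_norm //; ring.
- have [s1_ge0|s1_lt0] := lerP 0 s1.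
  + have -> : q = s2 by apply: (mulIf m_neq0); rewrite qm ger0_norm // mulrC.
    have : s2 <= s1 by move: h12; rewrite (ger0_norm s1_ge0); case: (ler0P s2) => ?; lra.
    by move=> le21; rewrite (min_idPr le21) (max_idPl le21) ger0_norm //; ring.
  + have -> : q = - s2 by apply: (mulIf m_neq0); rewrite qm ltr0_norm //; ring.
    have : s1 <= s2 by move: h12; rewrite (ltr0_norm s1_lt0); case: (ler0P s2) => ?; lra.
    by move=> le12; rewrite (min_idPl le12) (max_idPr le12) ltr0_norm //; ring.
Qed.

Lemma collinear_divergence_sqr (s1 s2 : R) : -1 <= s1 <= 1 -> -1 <= s2 <= 1 ->
  Num.sqrt (collinear_cost s1 s2 - (collinear_cost s1 s1 + collinear_cost s2 s2) / 2) ^+ 2 =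
  2 * (`|s1 - s2| + Num.sqrt (1 - `|s1| ^+ 2) + Num.sqrt (1 - `|s2| ^+ 2)
       - 2 * Num.sqrt ((1 + Num.min s1 s2) * (1 - Num.max s1 s2))).
Proof.
move=> /andP[h1 h1'] /andP[h2 h2'].
rewrite (collinear_costE h1 (lexx s1) h1') (collinear_costE h2 (lexx s2) h2').
rewrite !real_normK ?num_real //.
have -> : 1 - s1 ^+ 2 = (1 + s1) * (1 - s1) by ring.
have -> : 1 - s2 ^+ 2 = (1 + s2) * (1 - s2) by ring.
case: (leP s1 s2) => [h12|/ltW h21].
- rewrite (collinear_costE h1 h12 h2') ler0_norm ?subr_le0 //.
  have := two_sqrt_cross_le h1 h12 h2' => hX; rewrite sqr_sqrtr; lra.
- rewrite /collinear_cost minC maxC -/(collinear_cost s2 s1) (collinear_costE h2 h21 h1').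
  rewrite ger0_norm ?subr_ge0 //.
  have := two_sqrt_cross_le h2 h21 h1' => hX; rewrite sqr_sqrtr; lra.
Qed.

End RealInequalities.

Section CostMatrix.
Variable R : realType.
Local Notation C := (R[i]).

Definition pauli_entry (k a b : nat) : C :=
  match k, a, b with
  | 0, 0, 1 => 1 | 0, 1, 0 => 1
  | 1, 0, 1 => - 'i | 1, 1, 0 => 'i
  | 2, 0, 0 => 1 | 2, 1, 1 => -1
  | _, _, _ => 0 end.

Lemma pauliE k a b : (k < 3)%N -> (a < 2)%N -> (b < 2)%N ->
  pauli R (inord k) (inord a) (inord b) = pauli_entry k a b.
Proof.
move=> hk ha hb; have val_inord n m : (m < n.+1)%N -> val (inord m : 'I_n.+1) = m.
  by move=> hm; rewrite /= inordK.
rewrite /pauli val_inord //.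
case: k hk => [|[|[|]]] // _; rewrite !mxE inord_eq //;
  by case: a ha => [|[|]] // _; case: b hb => [|[|]] // _; rewrite val_inord.
Qed.

Lemma pauli_sqr k : pauli R k *m pauli R k = 1%:M.
Proof.
apply/matrixP => i j; rewrite !mxE sum_ord2.
case: (ord3_cases k) => ->; case: (ord2_cases i) => ->; case: (ord2_cases j) => ->;
  rewrite !pauliE // inord_eq //= ?(mulNr, mulrN) -?expr2 ?sqr_i; ring.
Qed.

Lemma kron_mulmx (A B A' B' : 'M[C]_2) :
  kron A B *m kron A' B' = kron (A *m A') (B *m B').
Proof.
apply/matrixP => p q; rewrite !mxE sum_ord4 !mxE !sum_ord2 /hidx /didx !inordK //=.
ring.
Qed.

Lemma pauli_diff_sqr k :
  (kron (pauli R k) (1%:M)^T - kron 1%:M (pauli R k)^T) ^+ 2 =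
  2%:R *: (kron 1%:M 1%:M - kron (pauli R k) (pauli R k)^T).
Proof.
rewrite expr2 mulrBl !mulrBr -!mulmxE !kron_mulmx trmx1 !mul1mx !mulmx1.
by rewrite -trmx_mul pauli_sqr trmx1 scaler_nat mulr2n opprB.
Qed.

Definition entangled : 'cV[C]_4 := \col_p (hidx p == didx p)%:R.

Lemma Csymm2E : Csymm2 R = 8%:M - 4%:R *: (entangled *m adj entangled).
Proof.
rewrite /Csymm2 (eq_bigr _ (fun k _ => pauli_diff_sqr k)).
apply/matrixP => p q; rewrite summxE sum_ord3 !mxE big_ord1 !mxE rmorph_nat.
case: p => [[|[|[|[|p]]]] hp] //; case: q => [[|[|[|[|q]]]] hq] //;
  rewrite /hidx /didx /= !pauliE // !inord_eq //= ?(mulNr, mulrN) -?expr2 ?sqr_i; ring.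
Qed.

End CostMatrix.

Section QuadraticForms.
Variable R : realType.
Local Notation C := (R[i]).

Lemma conjcD (x y : C) : conjc (x + y) = conjc x + conjc y. Proof. exact: rmorphD. Qed.
Lemma conjcN (x : C) : conjc (- x) = - conjc x. Proof. exact: rmorphN. Qed.
Lemma conjcB (x y : C) : conjc (x - y) = conjc x - conjc y. Proof. exact: rmorphB. Qed.
Lemma conjcM (x y : C) : conjc (x * y) = conjc x * conjc y. Proof. exact: rmorphM. Qed.

Definition qform n (A : 'M[C]_n) (v : 'cV[C]_n) : C := (adj v *m A *m v) 0 0.
Definition dotc n (x y : 'cV[C]_n) : C := (adj x *m y) 0 0.
Definition sqnorm n (v : 'cV[C]_n) : C := dotc v v.
Definition conjv n (v : 'cV[C]_n) : 'cV[C]_n := map_mx conjc v.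

Lemma conjvK n (v : 'cV[C]_n) : conjv (conjv v) = v.
Proof. by apply/matrixP => i j; rewrite !mxE conjcK. Qed.

Lemma qformE n (A : 'M[C]_n) v :
  qform A v = \sum_i \sum_j conjc (v i 0) * A i j * v j 0.
Proof.
rewrite /qform mxE; under eq_bigr => j _ do rewrite mxE mulr_suml.
rewrite exchange_big /=; apply: eq_bigr => i _; apply: eq_bigr => j _.
by rewrite /adj !mxE.
Qed.

Lemma qformDl n (A B : 'M[C]_n) v : qform (A + B) v = qform A v + qform B v.
Proof. by rewrite /qform mulmxDr mulmxDl mxE. Qed.

Lemma qformZl n (k : C) (A : 'M[C]_n) v : qform (k *: A) v = k * qform A v.
Proof. by rewrite /qform -scalemxAr -scalemxAl mxE. Qed.

Lemma qformZr n (k : C) (A : 'M[C]_n) v : qform A (k *: v) = conjc k * k * qform A v.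
Proof.
rewrite !qformE mulr_sumr; apply: eq_bigr => i _; rewrite mulr_sumr.
by apply: eq_bigr => j _; rewrite !mxE conjcM; ring.
Qed.

Lemma qform_eigen n (A : 'M[C]_n) v c : A *m v = c *: v -> qform A v = c * sqnorm v.
Proof. by move=> Av; rewrite /qform -mulmxA Av -scalemxAr mxE. Qed.

Lemma qform_trmx n (A : 'M[C]_n) v : qform A^T (conjv v) = qform A v.
Proof.
rewrite !qformE exchange_big; apply: eq_bigr => i _; apply: eq_bigr => j _.
by rewrite !mxE conjcK; ring.
Qed.

Lemma qform_real_lincomb n (A : 'M[C]_n) v w (a b : R) :
  qform A (a%:C *: v - b%:C *: w) = a%:C * a%:C * qform A v + b%:C * b%:C * qform A w
     - a%:C * b%:C * (qform A (v + w) - qform A v - qform A w).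
Proof.
rewrite !qformE -!sumrB !mulr_sumr -!big_split -sumrB /=; apply: eq_bigr => i _.
rewrite -!sumrB !mulr_sumr -!big_split -sumrB /=; apply: eq_bigr => j _.
rewrite !mxE !conjcB !conjcD !conjcM !conjc_real; ring.
Qed.

Lemma adj_mul m n p (A : 'M[C]_(m, n)) (B : 'M[C]_(n, p)) : adj (A *m B) = adj B *m adj A.
Proof. by rewrite /adj map_mxM trmx_mul. Qed.

Lemma adjK m n (A : 'M[C]_(m, n)) : adj (adj A) = A.
Proof. by apply/matrixP => i j; rewrite /adj !mxE conjcK. Qed.

Lemma adj_add m n (A B : 'M[C]_(m, n)) : adj (A + B) = adj A + adj B.
Proof. by apply/matrixP => i j; rewrite !mxE conjcD. Qed.

Lemma adj_scale m n (k : C) (A : 'M[C]_(m, n)) : adj (k *: A) = conjc k *: adj A.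
Proof. by apply/matrixP => i j; rewrite !mxE conjcM. Qed.

Lemma dotcDl n (x y z : 'cV[C]_n) : dotc (x + y) z = dotc x z + dotc y z.
Proof. by rewrite /dotc adj_add mulmxDl mxE. Qed.

Lemma dotcZl n (c : C) (x z : 'cV[C]_n) : dotc (c *: x) z = conjc c * dotc x z.
Proof. by rewrite /dotc adj_scale -scalemxAl mxE. Qed.

Lemma qform_outer n (x w : 'cV[C]_n) : qform (x *m adj x) w = conjc (dotc x w) * dotc x w.
Proof.
rewrite /qform /dotc mulmxA -mulmxA -[adj w *m x]adjK adj_mul adjK.
by rewrite mxE big_ord1 /adj !mxE.
Qed.

Lemma conjc_sqnorm n (x : 'cV[C]_n) : conjc (sqnorm x) = sqnorm x.
Proof.
rewrite /sqnorm /dotc mxE (big_morph _ conjcD (conjc0 R)); apply: eq_bigr => i _.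
by rewrite !mxE conjcM conjcK mulrC.
Qed.

Lemma psd_outer n (x : 'cV[C]_n) : psd (x *m adj x).
Proof.
move=> v; rewrite mulmxA -mulmxA.
have -> : adj v *m x = adj (adj x *m v) by rewrite adj_mul adjK.
rewrite mxE big_ord1 /adj !mxE mulrC; exact: mulcJ_ge0.
Qed.

Lemma psdD n (A B : 'M[C]_n) : psd A -> psd B -> psd (A + B).
Proof. by move=> hA hB v; rewrite -[_ 0 0]/(qform _ v) qformDl addr_ge0 ?hA ?hB. Qed.

Lemma psdZ n (k : R) (A : 'M[C]_n) : 0 <= k -> psd A -> psd (k%:C *: A).
Proof. by move=> hk hA v; rewrite -[_ 0 0]/(qform _ v) qformZl mulr_ge0 ?ler0c ?hA. Qed.

Lemma psd_qform_real n (A : 'M[C]_n) v : psd A -> exists2 r : R, qform A v = r%:C & 0 <= r.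
Proof.
move=> /(_ v) hv; have /complex_realP [r er] := ger0_real hv.
by exists r => //; rewrite -ler0c -er.
Qed.

Lemma mxtrace_Csymm2 (P : 'M[C]_4) :
  \tr (P *m Csymm2 R) = 8 * \tr P - 4 * qform P (entangled R).
Proof.
rewrite Csymm2E mulmxBr mul_mx_scalar -scalemxAr linearB !linearZ /=.
by rewrite mulmxA mxtrace_mulC mulmxA /mxtrace big_ord1.
Qed.

End QuadraticForms.

Section Tensors.
Variable R : realType.
Local Notation C := (R[i]).

Definition tens (x y : 'cV[C]_2) : 'cV[C]_4 := \col_p (x (hidx p) 0 * y (didx p) 0).

Definition perp (y : 'cV[C]_2) : 'cV[C]_2 :=
  \col_i (if i == inord 0 then - conjc (y (inord 1) 0) else conjc (y (inord 0) 0)).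

Lemma ptrDE (P : 'M[C]_4) a k : (a < 2)%N -> (k < 2)%N ->
  ptrD P (inord a) (inord k) =
  P (inord (2 * a)) (inord (2 * k)) + P (inord (2 * a).+1) (inord (2 * k).+1).
Proof.
move=> ha hk; rewrite mxE !sum_ord4 /hidx /didx !inordK //= !inord_eq //.
by case: a ha => [|[|]] // _; case: k hk => [|[|]] // _ /=; rewrite ?add0r ?addr0.
Qed.

Lemma ptrHE (P : 'M[C]_4) j l : (j < 2)%N -> (l < 2)%N ->
  ptrH P (inord j) (inord l) = P (inord j) (inord l) + P (inord (2 + j)) (inord (2 + l)).
Proof.
move=> hj hl; rewrite mxE !sum_ord4 /hidx /didx !inordK //= !inord_eq //.
by case: j hj => [|[|]] // _; case: l hl => [|[|]] // _ /=; rewrite ?add0r ?addr0.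
Qed.

Ltac expand_entries :=
  rewrite ?qformE /sqnorm /dotc ?mxE ?sum_ord4 ?sum_ord2 ?ptrDE ?ptrHE //
    ?mxE ?big_ord1 ?sum_ord2 ?mxE /hidx /didx ?inordK //= ?eqxx ?inord_eq //=
    ?(conjcB, conjcD, conjcN, conjcM) ?conjcK.

Lemma mxtrace_ptrD (P : 'M[C]_4) : \tr (ptrD P) = \tr P.
Proof. by rewrite /mxtrace sum_ord2 sum_ord4 !ptrDE //= addrA. Qed.

Lemma qform_ptrD (P : 'M[C]_4) x y :
  qform P (tens x (conjv y)) + qform P (tens x (conjv (perp y))) =
  sqnorm y * qform (ptrD P) x.
Proof. expand_entries; ring. Qed.

Lemma qform_ptrH (P : 'M[C]_4) x y :
  qform P (tens y x) + qform P (tens (perp y) x) = sqnorm y * qform (ptrH P) x.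
Proof. expand_entries; ring. Qed.

Lemma sqnorm_perp y : sqnorm (perp y) = sqnorm y.
Proof. expand_entries; ring. Qed.

Lemma tens_perp_sum y :
  tens y (conjv y) + tens (perp y) (conjv (perp y)) = sqnorm y *: entangled R.
Proof.
apply/matrixP => p j; rewrite (ord1 j).
case: p => [[|[|[|[|p]]]] hp] //; expand_entries; ring.
Qed.

Lemma trmx_outer n (x : 'cV[C]_n) : (x *m adj x)^T = conjv x *m adj (conjv x).
Proof. by apply/matrixP => i j; rewrite !mxE !big_ord1 !mxE conjcK mulrC. Qed.

Lemma ptrDD (A B : 'M[C]_4) : ptrD (A + B) = ptrD A + ptrD B.
Proof.
apply/matrixP => i k; rewrite !mxE -big_split; apply: eq_bigr => p _.
by rewrite -big_split; apply: eq_bigr => q _; case: ifP => _ /=; rewrite ?mxE ?addr0.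
Qed.

Lemma ptrDZ (c : C) (A : 'M[C]_4) : ptrD (c *: A) = c *: ptrD A.
Proof.
apply/matrixP => i k; rewrite !mxE mulr_sumr; apply: eq_bigr => p _.
by rewrite mulr_sumr; apply: eq_bigr => q _; case: ifP => _ /=; rewrite ?mxE ?mulr0.
Qed.

Lemma ptrHD (A B : 'M[C]_4) : ptrH (A + B) = ptrH A + ptrH B.
Proof.
apply/matrixP => i k; rewrite !mxE -big_split; apply: eq_bigr => p _.
by rewrite -big_split; apply: eq_bigr => q _; case: ifP => _ /=; rewrite ?mxE ?addr0.
Qed.

Lemma ptrHZ (c : C) (A : 'M[C]_4) : ptrH (c *: A) = c *: ptrH A.
Proof.
apply/matrixP => i k; rewrite !mxE mulr_sumr; apply: eq_bigr => p _.
by rewrite mulr_sumr; apply: eq_bigr => q _; case: ifP => _ /=; rewrite ?mxE ?mulr0.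
Qed.

Lemma ptrD_tens_outer x y x' y' :
  ptrD (tens x y *m adj (tens x' y')) = dotc y' y *: (x *m adj x').
Proof.
apply/matrixP => i k; case: (ord2_cases i) => ->; case: (ord2_cases k) => ->; expand_entries; ring.
Qed.

Lemma ptrH_tens_outer x y x' y' :
  ptrH (tens x y *m adj (tens x' y')) = dotc x' x *: (y *m adj y').
Proof.
apply/matrixP => i k; case: (ord2_cases i) => ->; case: (ord2_cases k) => ->; expand_entries; ring.
Qed.

Lemma ptrD_outer_sum2 x1 y1 x2 y2 (c1 c2 : C) :
  let g := c1 *: tens x1 y1 + c2 *: tens x2 y2 in
  ptrD (g *m adj g) =
    (c1 * conjc c1 * dotc y1 y1) *: (x1 *m adj x1) + (c1 * conjc c2 * dotc y2 y1) *: (x1 *m adj x2)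
  + (c2 * conjc c1 * dotc y1 y2) *: (x2 *m adj x1) + (c2 * conjc c2 * dotc y2 y2) *: (x2 *m adj x2).
Proof.
apply/matrixP => i k; case: (ord2_cases i) => ->; case: (ord2_cases k) => ->; expand_entries; ring.
Qed.

Lemma ptrH_outer_sum2 x1 y1 x2 y2 (c1 c2 : C) :
  let g := c1 *: tens x1 y1 + c2 *: tens x2 y2 in
  ptrH (g *m adj g) =
    (c1 * conjc c1 * dotc x1 x1) *: (y1 *m adj y1) + (c1 * conjc c2 * dotc x2 x1) *: (y1 *m adj y2)
  + (c2 * conjc c1 * dotc x1 x2) *: (y2 *m adj y1) + (c2 * conjc c2 * dotc x2 x2) *: (y2 *m adj y2).
Proof.
apply/matrixP => i k; case: (ord2_cases i) => ->; case: (ord2_cases k) => ->; expand_entries; ring.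
Qed.

Lemma dotc_conjv n (x y : 'cV[C]_n) : dotc (conjv x) (conjv y) = conjc (dotc x y).
Proof.
rewrite /dotc !mxE (big_morph _ (@conjcD R) (conjc0 R)); apply: eq_bigr => i _.
by rewrite !mxE conjcM.
Qed.

Lemma dotc_perp y : dotc (perp y) y = 0.
Proof. expand_entries; ring. Qed.

Lemma dotc_perp_r y : dotc y (perp y) = 0.
Proof. expand_entries; ring. Qed.

Lemma dotc_tens_entangled x y : dotc (tens x (conjv y)) (entangled R) = dotc x y.
Proof. expand_entries; ring. Qed.

End Tensors.

Section Witness.
Variable R : realType.
Local Notation C := (R[i]).

Definition witness (u : 'cV[C]_2) (a b k1 k2 : R) : 'M[C]_4 :=
  let g := a%:C *: tens u (conjv u) + b%:C *: tens (perp u) (conjv (perp u)) in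
  g *m adj g
  + k1%:C *: (tens u (conjv (perp u)) *m adj (tens u (conjv (perp u))))
  + k2%:C *: (tens (perp u) (conjv u) *m adj (tens (perp u) (conjv u))).

Variables (u : 'cV[C]_2) (a b k1 k2 : R).
Local Notation W := (witness u a b k1 k2).

Lemma witness_psd : 0 <= k1 -> 0 <= k2 -> psd W.
Proof.
move=> h1 h2; apply: psdD; first apply: psdD.
- exact: psd_outer.
- exact: psdZ (psd_outer _).
- exact: psdZ (psd_outer _).
Qed.

Lemma ptrD_witness : ptrD W = sqnorm u *: ((a * a + k1)%:C *: (u *m adj u)
  + (b * b + k2)%:C *: (perp u *m adj (perp u))).
Proof.
rewrite /witness /= ptrDD ptrDD !ptrDZ ptrD_outer_sum2 !ptrD_tens_outer.
rewrite !dotc_conjv dotc_perp dotc_perp_r -!/(sqnorm _) sqnorm_perp !conjc_sqnorm !conjc_real.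
by apply/matrixP => i j; rewrite !mxE !rmorphD !rmorphM ?rmorph0; ring.
Qed.

Lemma ptrH_witness : ptrH W = sqnorm u *: ((a * a + k2)%:C *: (conjv u *m adj (conjv u))
  + (b * b + k1)%:C *: (conjv (perp u) *m adj (conjv (perp u)))).
Proof.
rewrite /witness /= ptrHD ptrHD !ptrHZ ptrH_outer_sum2 !ptrH_tens_outer.
rewrite dotc_perp dotc_perp_r -!/(sqnorm _) sqnorm_perp !conjc_real.
by apply/matrixP => i j; rewrite !mxE !rmorphD !rmorphM ?rmorph0; ring.
Qed.

Lemma qform_witness_entangled :
  qform W (entangled R) = ((a + b) * (a + b))%:C * (sqnorm u * sqnorm u).
Proof.
rewrite /witness /= !qformDl !qformZl !qform_outer dotcDl !dotcZl !dotc_tens_entangled.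
rewrite dotc_perp dotc_perp_r -!/(sqnorm _) sqnorm_perp !conjc_real.
by rewrite !(conjcD, conjcM) conjc_sqnorm !conjc_real ?(conjc0 R) !rmorphM !rmorphD; ring.
Qed.

End Witness.

Section BlochAxis.
Variable R : realType.
Local Notation C := (R[i]).

Lemma invC2 : (2^-1 : C) = (2^-1 : R)%:C.
Proof. by rewrite fmorphV rmorph_nat. Qed.

Lemma oneC : (1 : C) = 1 +i* 0. Proof. by []. Qed.
Lemma zeroC : (0 : C) = 0 +i* 0. Proof. by []. Qed.

Ltac csimp := rewrite ?invC2 -?complexr0 ?oneC ?zeroC; simpc.

Section Entries.
Variable r : 'rV[R]_3.
Local Notation x1 := (r 0 (inord 0)).
Local Notation x2 := (r 0 (inord 1)).
Local Notation x3 := (r 0 (inord 2)).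

Ltac bloch_entry := rewrite !mxE summxE sum_ord3 !mxE !pauliE // inord_eq //=; csimp;
  congr (_ +i* _); ring.

Lemma bloch00 : bloch r (inord 0) (inord 0) = ((1 + x3) / 2) +i* 0.
Proof. bloch_entry. Qed.
Lemma bloch01 : bloch r (inord 0) (inord 1) = (x1 / 2) +i* (- (x2 / 2)).
Proof. bloch_entry. Qed.
Lemma bloch10 : bloch r (inord 1) (inord 0) = (x1 / 2) +i* (x2 / 2).
Proof. bloch_entry. Qed.
Lemma bloch11 : bloch r (inord 1) (inord 1) = ((1 - x3) / 2) +i* 0.
Proof. bloch_entry. Qed.

End Entries.

Lemma mxtrace_bloch (r : 'rV[R]_3) : \tr (bloch r) = 1.
Proof.
by rewrite /mxtrace sum_ord2 bloch00 bloch11 oneC; simpc; congr (_ +i* _); lra.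
Qed.

(* Up to normalization the +1 eigenvector of n.sigma; it vanishes only at n = -e3,
   which the hypothesis 0 <= n3 excludes below. *)
Definition axis_ket (n : 'rV[R]_3) : 'cV[C]_2 :=
  \col_i (if i == inord 0 then (1 + n 0 (inord 2)) +i* 0 else n 0 (inord 0) +i* n 0 (inord 1)).

Lemma dot3E (x y : 'rV[R]_3) :
  dot3 x y = x 0 (inord 0) * y 0 (inord 0) + x 0 (inord 1) * y 0 (inord 1)
             + x 0 (inord 2) * y 0 (inord 2).
Proof. by rewrite /dot3 sum_ord3. Qed.

Variable n : 'rV[R]_3.
Hypothesis n_unit : dot3 n n = 1.
Local Notation n1 := (n 0 (inord 0)).
Local Notation n2 := (n 0 (inord 1)).
Local Notation n3 := (n 0 (inord 2)).
Local Notation u := (axis_ket n).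

Let n_sqr_sum : n1 * n1 + n2 * n2 + n3 * n3 = 1. Proof. by rewrite -dot3E. Qed.

(* lra treats monomials as atoms, so the unit-norm relation is supplied multiplied
   by each factor it is needed with. *)
Ltac axis_entry s :=
  rewrite ?bloch00 ?bloch01 ?bloch10 ?bloch11 ?mxE ?sum_ord2 ?big_ord1 ?mxE
    ?eqxx ?inord_eq //= ?mxE; csimp; congr (_ +i* _);
  have := n_sqr_sum; have := congr1 (fun t => s * t) n_sqr_sum;
  have := congr1 (fun t => n3 * t) n_sqr_sum; have := congr1 (fun t => s * n3 * t) n_sqr_sum;
  lra.

Lemma sqnorm_axis_ket : sqnorm u = (2 * (1 + n3))%:C.
Proof. rewrite /sqnorm /dotc; axis_entry (0 : R). Qed.

Lemma bloch_axis_eigen s : bloch (s *: n) *m u = ((1 + s) / 2)%:C *: u.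
Proof.
apply/matrixP => i j; rewrite (ord1 j); case: (ord2_cases i) => ->;
  rewrite [LHS]mxE sum_ord2; axis_entry s.
Qed.

Lemma bloch_axis_eigen_perp s : bloch (s *: n) *m perp u = ((1 - s) / 2)%:C *: perp u.
Proof.
apply/matrixP => i j; rewrite (ord1 j); case: (ord2_cases i) => ->;
  rewrite [LHS]mxE sum_ord2; axis_entry s.
Qed.

Lemma bloch_axis_spectral s : sqnorm u *: bloch (s *: n) =
  ((1 + s) / 2)%:C *: (u *m adj u) + ((1 - s) / 2)%:C *: (perp u *m adj (perp u)).
Proof.
rewrite sqnorm_axis_ket.
apply/matrixP => i j; case: (ord2_cases i) => ->; case: (ord2_cases j) => ->;
  rewrite [LHS]mxE; axis_entry s.
Qed.

End BlochAxis.

Section CollinearStates.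
Variable R : realType.
Local Notation C := (R[i]).
Variable n : 'rV[R]_3.
Hypothesis n_unit : dot3 n n = 1.
Hypothesis n3_ge0 : 0 <= n 0 (inord 2).
Local Notation u := (axis_ket n).
Local Notation N := (2 * (1 + n 0 (inord 2))).

Lemma qform_bloch_axis s : qform (bloch (s *: n)) u = (N * ((1 + s) / 2))%:C.
Proof.
by rewrite (qform_eigen (bloch_axis_eigen n_unit s)) sqnorm_axis_ket // -rmorphM mulrC.
Qed.

Lemma qform_bloch_axis_perp s : qform (bloch (s *: n)) (perp u) = (N * ((1 - s) / 2))%:C.
Proof.
rewrite (qform_eigen (bloch_axis_eigen_perp n_unit s)) sqnorm_perp.
by rewrite sqnorm_axis_ket // -rmorphM mulrC.
Qed.

Variables s1 s2 : R.
Let x0 := (1 + Num.min s1 s2) / 2.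
Let y0 := (1 - Num.max s1 s2) / 2.

Lemma coupling_overlap_le P f : coupling (bloch (s1 *: n)) (bloch (s2 *: n)) P ->
  qform P (entangled R) = f%:C -> f <= (Num.sqrt x0 + Num.sqrt y0) ^+ 2.
Proof.
case=> [[P_psd _] [hD hH]] hf.
(* a, b, g1, g2 are the weights of P on u (x) conj u, v (x) conj v, u (x) conj v and
   v (x) conj u, where v = perp u. *)
have NC : sqnorm u = N%:C := sqnorm_axis_ket n_unit.
have [a ea a_ge0] := psd_qform_real (tens u (conjv u)) P_psd.
have [b eb b_ge0] := psd_qform_real (tens (perp u) (conjv (perp u))) P_psd.
have [g1 eg1 g1_ge0] := psd_qform_real (tens u (conjv (perp u))) P_psd.
have [g2 eg2 g2_ge0] := psd_qform_real (tens (perp u) (conjv u)) P_psd.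
have eD1 := qform_ptrD P u u.
have eD2 := qform_ptrD P (perp u) u.
have eH1 := qform_ptrH P (conjv u) u.
have eH2 := qform_ptrH P (conjv (perp u)) u.
rewrite hD NC ?qform_bloch_axis ?qform_bloch_axis_perp ea eb eg1 eg2 in eD1 eD2.
rewrite hH NC !qform_trmx ?qform_bloch_axis ?qform_bloch_axis_perp ea eb eg1 eg2 in eH1 eH2.
move: eD1 eD2 eH1 eH2; rewrite -!rmorphD -!rmorphM.
move=> /complexI eD1 /complexI eD2 /complexI eH1 /complexI eH2.
have N_gt0 : 0 < N by have := n3_ge0; lra.
apply: (marginal_overlap_le N_gt0 a_ge0 b_ge0 g1_ge0 g2_ge0 eD1 eH1 eD2 eH2) => c d _ _.
have := P_psd (c%:C *: tens u (conjv u) - d%:C *: tens (perp u) (conjv (perp u))).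
rewrite -[_ 0 0]/(qform _ _) qform_real_lincomb tens_perp_sum qformZr hf NC conjc_real ea eb.
rewrite -!rmorphM -!rmorphB -!rmorphD -rmorphM -rmorphB ler0c; lra.
Qed.

Lemma coupling_cost_ge P t : coupling (bloch (s1 *: n)) (bloch (s2 *: n)) P ->
  \tr (P *m Csymm2 R) = t%:C -> collinear_cost s1 s2 <= t.
Proof.
rewrite /collinear_cost; move=> hP; have [f hf _] := psd_qform_real (entangled R) hP.1.1.
have := coupling_overlap_le hP hf.
rewrite mxtrace_Csymm2 hP.1.2 hf mulr1 -(rmorph_nat (real_complex R) 8).
by rewrite -(rmorph_nat (real_complex R) 4) -rmorphM -rmorphB => hle /complexI <-; lra.
Qed.

Hypothesis s1_range : -1 <= s1 <= 1.
Hypothesis s2_range : -1 <= s2 <= 1.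
(* The marginals force a^2 + k1 = (1 + s2)/(2 N^2), b^2 + k2 = (1 - s2)/(2 N^2) and the
   same with s1 and k1, k2 exchanged; taking a^2 = x0 / N^2 and b^2 = y0 / N^2 makes
   both k's nonnegative and the overlap with Phi maximal. *)
Let a := Num.sqrt x0 / N.
Let b := Num.sqrt y0 / N.
Let k1 := ((1 + s2) / 2 - x0) / (N * N).
Let k2 := ((1 + s1) / 2 - x0) / (N * N).
Local Notation W := (witness u a b k1 k2).

Lemma witness_coupling : coupling (bloch (s1 *: n)) (bloch (s2 *: n)) W /\
  \tr (W *m Csymm2 R) = (collinear_cost s1 s2)%:C.
Proof.
have N_gt0 : 0 < N by have := n3_ge0; lra.
have N_neq0 : N != 0 by rewrite gt_eqF.
have n3_neq0 : 1 + n 0 (inord 2) != 0 by rewrite gt_eqF //; have := n3_ge0; lra.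
have NC : sqnorm u = N%:C := sqnorm_axis_ket n_unit.
have NC_neq0 : sqnorm u != 0 by rewrite NC eq_complex /= negb_and N_neq0.
case/andP: s1_range => ? ?; case/andP: s2_range => ? ?.
have x0_ge0 : 0 <= x0 by rewrite /x0; case: (leP s1 s2) => ?; lra.
have y0_ge0 : 0 <= y0 by rewrite /y0; case: (leP s1 s2) => ?; lra.
have ey0 : y0 = x0 - (s1 + s2) / 2 by rewrite /y0 /x0; case: (leP s1 s2) => ?; lra.
have ea : a * a = x0 / (N * N) by rewrite /a mulf_div -expr2 sqr_sqrtr.
have eb : b * b = y0 / (N * N) by rewrite /b mulf_div -expr2 sqr_sqrtr.
have k1_ge0 : 0 <= k1.
  by apply: divr_ge0; [rewrite /x0; case: (leP s1 s2) => ?; lra | rewrite mulr_ge0 // ltW].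
have k2_ge0 : 0 <= k2.
  by apply: divr_ge0; [rewrite /x0; case: (leP s1 s2) => ?; lra | rewrite mulr_ge0 // ltW].
have marginal s c1 c2 : N * N * c1 = (1 + s) / 2 -> N * N * c2 = (1 - s) / 2 ->
    sqnorm u *: (c1%:C *: (u *m adj u) + c2%:C *: (perp u *m adj (perp u))) = bloch (s *: n).
  move=> e1 e2; apply: (scalerI NC_neq0); rewrite bloch_axis_spectral // -e1 -e2 NC.
  by apply/matrixP => i j; rewrite !mxE !rmorphM; ring.
have hD : ptrD W = bloch (s2 *: n).
  rewrite ptrD_witness; apply: marginal.
  - by rewrite ea /k1; field; rewrite n3_neq0.
  - by rewrite eb ey0 /k2; field; rewrite n3_neq0.
have hH : ptrH W = (bloch (s1 *: n))^T.
  apply: trmx_inj; rewrite trmxK ptrH_witness !(linearZ, linearD) /= !trmx_outer !conjvK.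
  apply: marginal.
  - by rewrite ea /k2; field; rewrite n3_neq0.
  - by rewrite eb ey0 /k1; field; rewrite n3_neq0.
have trW : \tr W = 1 by rewrite -mxtrace_ptrD hD mxtrace_bloch.
split; first by split; [split; [exact: witness_psd | exact: trW] | split].
have e : (a + b) * (a + b) * (N * N) = (Num.sqrt x0 + Num.sqrt y0) ^+ 2.
  by rewrite /a /b; field; rewrite n3_neq0.
rewrite mxtrace_Csymm2 trW qform_witness_entangled NC mulr1 -!rmorphM e.
by rewrite -(rmorph_nat (real_complex R) 8) -(rmorph_nat (real_complex R) 4) -rmorphM -rmorphB.
Qed.

Lemma D2symm_collinear :
  D2symm (bloch (s1 *: n)) (bloch (s2 *: n)) = collinear_cost s1 s2.
Proof.
have [W_coupling W_cost] := witness_coupling.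
rewrite /D2symm; set V := collinear_cost s1 s2; set E := (X in inf X).
have EV : E V by exists W.
have lbV : lbound E V by move=> t [P [hP ht]]; exact: coupling_cost_ge hP ht.
apply/le_anti/andP; split.
- by apply: (ge_inf (E := E)) => //; exists V.
- by apply: (lb_le_inf (E := E)) => //; exists V.
Qed.

End CollinearStates.

Lemma proportional_of_not_row_free (F : fieldType) n (r1 r2 : 'rV[F]_n) :
  ~~ row_free (col_mx r1 r2) -> exists w, exists t1 t2 : F, r1 = t1 *: w /\ r2 = t2 *: w.
Proof.
move=> not_free.
have ker_neq0 : kermx (col_mx r1 r2) != 0.
  rewrite -mxrank_eq0 mxrank_ker -lt0n subn_gt0 ltn_neqAle rank_leq_row andbT.
  by move: not_free; rewrite /row_free.
have [i v_neq0] : exists i, row i (kermx (col_mx r1 r2)) != 0.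
  apply/existsP; apply: contraR ker_neq0; rewrite negb_exists => /forallP row0_all.
  by apply/eqP/row_matrixP => i; rewrite row0; apply/eqP; move: (row0_all i); rewrite negbK.
set v := row i _ in v_neq0.
have : v *m col_mx r1 r2 = 0 by apply/sub_kermxP; exact: row_sub.
rewrite -[v]hsubmxK mul_row_col [lsubmx v]mx11_scalar [rsubmx v]mx11_scalar !mul_scalar_mx.
set a := lsubmx v 0 0; set b := rsubmx v 0 0 => /eqP; rewrite addr_eq0 => /eqP e.
have [b0|b_neq0] := eqVneq b 0.
  have a_neq0 : a != 0.
    apply: contraNneq v_neq0 => a0; rewrite -[v]hsubmxK [lsubmx v]mx11_scalar.
    by rewrite [rsubmx v]mx11_scalar -/a -/b a0 b0 !raddf0 row_mx0.
  exists r2, 0, 1; split; last by rewrite scale1r.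
  by move: e; rewrite b0 scale0r oppr0 => /eqP; rewrite scaler_eq0 (negbTE a_neq0) => /eqP.
exists r1, 1, (- (a / b)); split; first by rewrite scale1r.
by rewrite scaleNr mulrC -scalerA e scalerN scalerA mulVf // scale1r opprK.
Qed.

Section Axes.
Variable R : realType.

Lemma dot3Z (a b : R) (x y : 'rV[R]_3) : dot3 (a *: x) (b *: y) = a * b * dot3 x y.
Proof. by rewrite /dot3 mulr_sumr; apply: eq_bigr => k _; rewrite !mxE; ring. Qed.

Lemma norm3Z (a : R) (x : 'rV[R]_3) : norm3 (a *: x) = `|a| * norm3 x.
Proof. by rewrite /norm3 dot3Z -expr2 sqrtrM ?sqr_ge0 // sqrtr_sqr. Qed.

Lemma dot3_gt0 (x : 'rV[R]_3) : x != 0 -> 0 < dot3 x x.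
Proof.
move=> x_neq0; rewrite lt_def sumr_ge0 ?andbT => [|k _]; last by rewrite -expr2 sqr_ge0.
apply: contra x_neq0; rewrite psumr_eq0 => [/allP x0|k _]; last by rewrite -expr2 sqr_ge0.
apply/eqP/rowP => k; rewrite mxE; apply/eqP.
by have := x0 k (mem_index_enum k); rewrite mulf_eq0 orbb.
Qed.

Lemma unit_axis_decomposition (w : 'rV[R]_3) :
  exists n, exists s : R, [/\ dot3 n n = 1, 0 <= n 0 (inord 2) & w = s *: n].
Proof.
have [->|w_neq0] := eqVneq w 0.
  exists (\row_k (k == inord 2)%:R), 0; split; last by rewrite scale0r.
  - by rewrite dot3E !mxE !inord_eq //= mul0r mulr1 !add0r.
  - by rewrite mxE eqxx.
have w_gt0 := dot3_gt0 w_neq0.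
set nu := Num.sqrt (dot3 w w).
have nu_gt0 : 0 < nu by rewrite sqrtr_gt0.
have nu2 : nu ^+ 2 = dot3 w w by rewrite sqr_sqrtr // ltW.
pose sg : R := if 0 <= w 0 (inord 2) then 1 else -1.
have sg2 : sg * sg = 1 by rewrite /sg; case: ifP => _; ring.
exists ((sg / nu) *: w), (nu * sg); split.
- by rewrite dot3Z -nu2 -[RHS]sg2; field; rewrite gt_eqF.
- rewrite mxE mulrAC divr_ge0 ?(ltW nu_gt0) // /sg.
  case: ifP => [w3|/negbT w3]; first by rewrite mul1r.
  by rewrite mulN1r oppr_ge0 ltW // ltNge.
- rewrite scalerA (_ : nu * sg * (sg / nu) = 1) ?scale1r //.
  by rewrite -[RHS]sg2; field; rewrite gt_eqF.
Qed.

Lemma collinear_axis_decomposition (r1 r2 : 'rV[R]_3) : ~~ row_free (col_mx r1 r2) ->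
  exists n, exists s1 s2 : R,
    [/\ dot3 n n = 1, 0 <= n 0 (inord 2), r1 = s1 *: n & r2 = s2 *: n].
Proof.
case/proportional_of_not_row_free => w [t1 [t2 [-> ->]]].
have [n [s [n_unit n3_ge0 ->]]] := unit_axis_decomposition w.
by exists n, (t1 * s), (t2 * s); rewrite !scalerA.
Qed.

End Axes.

Local Close Scope complex_scope.

Theorem corollary3p3 (R : realType) (r1 r2 : 'rV[R]_3) :
  norm3 r1 <= 1 -> norm3 r2 <= 1 ->
  ~~ row_free (col_mx r1 r2) ->
  let m := Num.max (norm3 r1) (norm3 r2) in
  let q := if m == 0 then 0 else dot3 r1 r2 / m in
  dsymm (bloch r1) (bloch r2) ^+ 2 =
  2 * (norm3 (r1 - r2) + Num.sqrt (1 - norm3 r1 ^+ 2)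
       + Num.sqrt (1 - norm3 r2 ^+ 2)
       - 2 * Num.sqrt ((1 + q) * (1 - m))).
Proof.
move=> r1_le1 r2_le1 /collinear_axis_decomposition[n [s1 [s2 [n_unit n3_ge0 r1E r2E]]]] m q.
subst r1 r2; have norm_n : norm3 n = 1 by rewrite /norm3 n_unit sqrtr1.
rewrite /q /m -scalerBl dot3Z n_unit !norm3Z norm_n !mulr1 in r1_le1 r2_le1 *.
have s1_range : -1 <= s1 <= 1 by rewrite -ler_norml.
have s2_range : -1 <= s2 <= 1 by rewrite -ler_norml.
rewrite /dsymm !D2symm_collinear // collinear_divergence_sqr //.
by rewrite collinear_cross_factor.
Qed.
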